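(* Let $p>1$, $s\ge r\ge2$, let $Q$ be an $s$-vertex $r$-graph and let $\mathcal P$ be a hereditary property of $r$-graphs with $\lambda^{(p)}(Q,\mathcal P)>0$. Writing $\lambda_n^{(p)}=\lambda^{(p)}(Q,\mathcal P_n)$, there exist infinitely many $n$ such that $$\frac{\lambda_{n-1}^{(p)}(n-1)^{s/p}}{(n-1)_s}-\frac{\lambda_n^{(p)}n^{s/p}}{(n)_s}<\frac{1}{n\log n}\cdot\frac{\lambda_n^{(p)}n^{s/p}}{(n)_s},$$ where $(m)_s=m(m-1)\cdots(m-s+1)$.
   Context: An $r$-graph ($r\ge 2$) is a finite hypergraph all of whose edges have exactly $r$ vertices. For $I\subseteq V(H)$, $H[I]$ denotes the induced subhypergraph on $I$. For an $s$-vertex $r$-graph $Q$ and an $r$-graph $H$, $\mathcal N(Q,H)$ is the number of (not necessarily induced) subgraphs of $H$ isomorphic to $Q$. For an $n$-vertex $r$-graph $H$ with vertex set $[n]$ and $\mathbf x\in\mathbb R^n$, $P_{Q,H}(\mathbf x)=s!\sum_{\{i_1,\dots,i_s\}\in\binom{[n]}{s}}\mathcal N(Q,H[\{i_1,\dots,i_s\}])\,x_{i_1}\cdots x_{i_s}$, and for $p\ge1$, $\lambda^{(p)}(Q,H)=\max_{\|\mathbf x\|_p=1}P_{Q,H}(\mathbf x)$. A hereditary property $\mathcal P$ of $r$-graphs is a family of $r$-graphs closed under isomorphism and under taking induced subgraphs; as a standing assumption, whenever $H\in\mathcal P$, the disjoint union of $H$ with an isolated vertex is also in $\mathcal P$.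 $\mathcal P_n$ is the set of members of $\mathcal P$ with $n$ vertices; $\lambda^{(p)}(Q,\mathcal P_n)=\max\{\lambda^{(p)}(Q,H):H\in\mathcal P_n\}$ and $\lambda^{(p)}(Q,\mathcal P)=\lim_{n\to\infty}\lambda^{(p)}(Q,\mathcal P_n)n^{s/p-s}$ (this limit exists). Here $\log$ is the natural logarithm. *)

From HB Require Import structures.
From mathcomp Require Import all_boot all_order all_algebra.
From mathcomp Require Import all_classical all_reals all_analysis.
Set Implicit Arguments. Unset Strict Implicit. Unset Printing Implicit Defensive.
Import Order.TTheory GRing.Theory Num.Theory numFieldNormedType.Exports.
Local Open Scope ring_scope.

Definition is_rgraph (r n : nat) (E : {set {set 'I_n}}) : Prop :=
  forall e, e \in E -> #|e| = r.

(* Number of (not necessarily induced) subgraphs (V',E') of the hypergraph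
   with vertex set V and edge set E that are isomorphic to the s-vertex
   hypergraph with edge set EQ: those are exactly the pairs
   (f('I_s), {f(e) | e in EQ}) with f : 'I_s -> V injective and f(EQ) in E. *)
Definition nsub (s n : nat) (EQ : {set {set 'I_s}})
    (V : {set 'I_n}) (E : {set {set 'I_n}}) : nat :=
  #|[set VE : {set 'I_n} * {set {set 'I_n}} |
     [exists f : {ffun 'I_s -> 'I_n},
       [&& injectiveb f, f @: [set: 'I_s] \subset V,
           VE.1 == f @: [set: 'I_s],
           VE.2 == (fun e : {set 'I_s} => f @: e) @: EQ & VE.2 \subset E]]]|.

Definition induced (n : nat) (E : {set {set 'I_n}}) (I : {set 'I_n}) :
  {set {set 'I_n}} := [set e in E | e \subset I].

Local Open Scope classical_set_scope.

Definition PQH (R : realType) (s n : nat) (EQ : {set {set 'I_s}})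
    (E : {set {set 'I_n}}) (x : 'I_n -> R) : R :=
  (s`!)%:R * \sum_(I : {set 'I_n} | #|I| == s)
     (nsub EQ I (induced E I))%:R * \prod_(i in I) x i.

Definition pnorm (R : realType) (n : nat) (p : R) (x : 'I_n -> R) : R :=
  (\sum_(i < n) `|x i| `^ p) `^ p^-1.

(* lambda^{(p)}(Q,H) = max over the unit l^p sphere (written as sup; the
   sphere is compact and P_{Q,H} continuous, so the sup is attained) *)
Definition lamH (R : realType) (p : R) (s n : nat) (EQ : {set {set 'I_s}})
    (E : {set {set 'I_n}}) : R :=
  sup [set PQH EQ E x | x in [set x : 'I_n -> R | pnorm p x = 1]].

Definition property := forall n : nat, {set {set 'I_n}} -> Prop.

(* Hereditary property of r-graphs (with the standing isolated-vertex
   assumption).  Closure under isomorphism and induced subgraphs is encoded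
   as closure under pulling back along injections 'I_m -> 'I_n (a bijection
   gives isomorphism closure, an injection onto I gives H[I] relabelled). *)
Definition hereditary_rprop (r : nat) (P : property) : Prop :=
  [/\ (forall n E, P n E -> is_rgraph r E),
      (forall m n (f : 'I_m -> 'I_n) (E : {set {set 'I_n}}),
          injective f -> P n E ->
          P m (finset (fun e : {set 'I_m} => f @: e \in E)))
    & (forall n (E : {set {set 'I_n}}),
          P n E -> P n.+1 ((fun e : {set 'I_n} => widen_ord (leqnSn n) @: e) @: E))].

Definition lamPn (R : realType) (p : R) (s : nat) (EQ : {set {set 'I_s}})
    (P : property) (n : nat) : R :=
  sup [set lamH p EQ E | E in [set E : {set {set 'I_n}} | P n E]].

Definition lamP (R : realType) (p : R) (s : nat) (EQ : {set {set 'I_s}})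
    (P : property) : R :=
  limn (fun n : nat => lamPn p EQ P n * n%:R `^ (s%:R / p - s%:R)).

Definition anorm (R : realType) (p : R) (s : nat) (EQ : {set {set 'I_s}})
    (P : property) (n : nat) : R :=
  lamPn p EQ P n * n%:R `^ (s%:R / p) / (n ^_ s)%:R.

From HB Require Import structures.
From mathcomp Require Import all_boot all_order all_algebra.
From mathcomp Require Import all_classical all_reals all_analysis.
Import Order.TTheory GRing.Theory Num.Theory numFieldNormedType.Exports.
From mathcomp Require Import zify lra.
Local Open Scope classical_set_scope.
Local Open Scope ring_scope.

(* Since n^{s/p-s} <= n^{s/p}/(n)_s, the normalised values a_n dominate the
   sequence n^{s/p-s} lambda_n, which tends to lambda(Q,P) > 0; hence a_n >= c > 0
   for large n.  If a_{n-1} - a_n >= a_n/(n log n) held for all large n, then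
   a_{n-1} - a_n >= c/(n log n) >= c (log log (n+1) - log log n), so
   a_n + c log log (n+1) would be non-increasing, which is absurd because
   a_n >= 0 while log log n is unbounded. *)

Lemma leq_ffact_exp (n m : nat) : (n ^_ m <= n ^ m)%N.
Proof.
elim: m n => [|m IHm] n; first by rewrite ffactn0 expn0.
rewrite ffactnS expnS leq_mul2l; apply/orP; right.
apply: leq_trans (IHm n.-1) _; have [->|m0] := posnP m; first by rewrite !expn0.
by rewrite leq_exp2r // leq_pred.
Qed.

Section RealSequences.
Context {R : realType}.

Lemma ln_sub_le_div (x y : R) : 0 < x -> x <= y -> ln y - ln x <= (y - x) / x.
Proof.
move=> x0 xy; have y0 : 0 < y by apply: lt_le_trans xy.
rewrite -ln_div ?posrE //.
have -> : y / x = 1 + (y - x) / x by rewrite mulrBl divff ?gt_eqF // addrC subrK.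
apply: le_ln1Dx; apply: lt_le_trans (_ : 0 <= _); first by rewrite ltrN10.
by rewrite divr_ge0 ?subr_ge0 // ltW.
Qed.

Lemma lnln_succ_sub_le (k : nat) : (2 <= k)%N ->
  ln (ln (k.+1%:R : R)) - ln (ln (k%:R : R)) <= (k%:R * ln (k%:R : R))^-1.
Proof.
move=> k2.
have k0 : (0 : R) < k%:R by rewrite ltr0n; case: k k2.
have lk0 : (0 : R) < ln k%:R by apply: ln_gt0; rewrite ltr1n.
have kk : (k%:R : R) <= k.+1%:R by rewrite ler_nat.
have lkk : ln (k%:R : R) <= ln k.+1%:R.
  by rewrite ler_ln ?posrE // (lt_le_trans k0 kk).
apply: le_trans (ln_sub_le_div _ _ lk0 lkk) _.
rewrite invfM; apply: ler_wpM2r; first by rewrite invr_ge0 ltW.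
apply: le_trans (ln_sub_le_div _ _ k0 kk) _.
by rewrite -natrB // subSnn mul1r.
Qed.

Lemma lnln_nat_unbounded (K : R) (M : nat) :
  exists2 n, (M <= n)%N & K < ln (ln (n%:R : R)).
Proof.
set n := maxn M (Num.truncn (expR (expR K))).+1.
exists n; first exact: leq_maxl.
have eKn : expR (expR K) < n%:R.
  by apply: lt_le_trans (truncnS_gt _) _; rewrite ler_nat leq_maxr.
have n0 : 0 < (n%:R : R) by apply: lt_trans eKn; rewrite expR_gt0.
have lK : expR K < ln (n%:R : R).
  by rewrite -(expRK (expR K)) ltr_ln ?posrE ?expR_gt0.
by rewrite -(expRK K) ltr_ln ?posrE ?expR_gt0 // (lt_trans (expR_gt0 _) lK).
Qed.

Lemma infinitely_many_slow_steps (a : nat -> R) (c : R) :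
  0 < c -> (\forall n \near \oo, c <= a n) ->
  forall N, exists n, (N < n)%N /\
    a n.-1 - a n < (n%:R * ln (n%:R : R))^-1 * a n.
Proof.
move=> c0 [M _ ac] N; apply: contrapT => no_slow.
have fast n : (N < n)%N -> (n%:R * ln (n%:R : R))^-1 * a n <= a n.-1 - a n.
  by move=> Nn; rewrite leNgt; apply/negP => slow; apply: no_slow; exists n.
set M' := maxn (maxn N M) 1.
set g := fun m => a m + c * ln (ln (m.+1%:R : R)).
have g_step m : (M' <= m)%N -> g m.+1 <= g m.
  move=> Mm; have m2 : (2 <= m.+1)%N by lia.
  have Nm : (N < m.+1)%N by lia.
  have cam : c <= a m.+1 by apply: ac => /=; lia.
  have w0 : 0 <= (m.+1%:R * ln (m.+1%:R : R))^-1.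
    by rewrite invr_ge0 mulr_ge0 // ln_ge0 // ler1n.
  have lw := lnln_succ_sub_le _ m2; have aw := fast _ Nm.
  have : c * (ln (ln m.+2%:R) - ln (ln m.+1%:R)) <= a m - a m.+1.
    apply: le_trans (ler_wpM2l (ltW c0) lw) _.
    by apply: le_trans aw; rewrite mulrC ler_wpM2l.
  rewrite /g mulrBr; lra.
have g_le j : g (M' + j)%N <= g M'.
  by elim: j => [|j IHj]; rewrite ?addn0 // addnS (le_trans (g_step _ _)) ?leq_addr.
have [n Mn lnln_big] := lnln_nat_unbounded (g M' / c) M'.+1.
have := g_le (n.-1 - M')%N; rewrite subnKC; last by lia.
have can : c <= a n.-1 by apply: ac => /=; lia.
move: lnln_big; rewrite ltr_pdivrMr // [_ * c]mulrC /g prednK; last by lia.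
lra.
Qed.

Lemma powR_subn_le_div_ffact (e : R) (n s : nat) :
  (0 < n)%N -> (s <= n)%N ->
  n%:R `^ (e - s%:R) <= n%:R `^ e / (n ^_ s)%:R.
Proof.
move=> n0 sn.
have powRe : (n%:R : R) `^ e = n%:R `^ (e - s%:R) * n%:R ^+ s.
  rewrite -powR_mulrn ?ler0n // -powRD ?subrK //.
  by apply/implyP => _; rewrite pnatr_eq0 -lt0n.
have f0 : (0 : R) < (n ^_ s)%:R by rewrite ltr0n ffact_gt0.
rewrite powRe -mulrA ler_peMr ?powR_ge0 //.
by rewrite ler_pdivlMr // mul1r -natrX ler_nat leq_ffact_exp.
Qed.

Lemma limn_gt0_lower_bound (u : nat -> R) : 0 < limn u ->
  exists2 c, 0 < c & \forall n \near \oo, c <= u n.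
Proof.
(* [limn] of a divergent sequence is 0, so a positive limit is a true limit. *)
move=> L0; have uL : u @ \oo --> limn u.
  by apply: contrapT => ncu; move: L0; rewrite (dvgP ncu) ltxx.
exists (limn u / 2); first by rewrite divr_gt0.
have half_lt : limn u / 2 < limn u by rewrite ltr_pdivrMr // ltr_pMr // ltr1n.
have ugt := cvgr_gt _ uL _ half_lt.
near=> n; apply/ltW; near: n; exact: ugt.
Unshelve. all: by end_near.
Qed.

End RealSequences.

Theorem lemma3p4 (R : realType) (p : R) (r s : nat)
    (EQ : {set {set 'I_s}}) (P : property) :
  1 < p -> (2 <= r)%N -> (r <= s)%N -> is_rgraph r EQ ->
  hereditary_rprop r P ->
  0 < lamP p EQ P ->
  forall N : nat, exists n : nat, (N < n)%N /\
    anorm p EQ P n.-1 - anorm p EQ P n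
      < (n%:R * ln (n%:R : R))^-1 * anorm p EQ P n.
Proof.
(* Only the positivity of lambda(Q,P) is needed. *)
move=> _ _ _ _ _ L0; have [c c0 bc] := limn_gt0_lower_bound _ L0.
apply: (infinitely_many_slow_steps (anorm p EQ P) c c0); near=> n.
have n0 : (0 < n)%N by near: n; exact: nbhs_infty_gt.
have sn : (s <= n)%N by near: n; exact: nbhs_infty_ge.
have cb : c <= lamPn p EQ P n * n%:R `^ (s%:R / p - s%:R) by near: n.
have x0 : 0 < (n%:R : R) `^ (s%:R / p - s%:R) by rewrite powR_gt0 // ltr0n.
have lam0 : 0 <= lamPn p EQ P n by rewrite -(pmulr_lge0 _ x0) (le_trans (ltW c0)).
apply: le_trans cb _; rewrite /anorm -mulrA.
by apply: (ler_wpM2l lam0); apply: powR_subn_le_div_ffact.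
Unshelve. all: by end_near.
Qed.
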